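(* Let $\sigma$ be a nonempty finite sequence of nonnegative integers avoiding both patterns $010$ and $210$. Let $q$ be the largest value $\sigma_l$ of $\sigma$ such that there is $i<l$ with $\sigma_i>\sigma_l$, or $q=0$ if no such value exists (i.e. $\sigma$ is nondecreasing), and let $r$ be the number of distinct values of $\sigma$ that are $\geqslant q$. Then $\mathrm{forb}(\sigma,\{010,210\})=q+r$.
   Context: A sequence contains a pattern $p$ if some subsequence is order-isomorphic to $p$; otherwise it avoids $p$. Avoiding $010$: no $i<j<l$ with $\sigma_i=\sigma_l<\sigma_j$. Avoiding $210$: no $i<j<l$ with $\sigma_i>\sigma_j>\sigma_l$. For a sequence $\sigma$ avoiding a set of patterns $P$, a value $v\in\{0,\dots,\max(\sigma)\}$ is forbidden by $\sigma$ and $P$ if the sequence $\sigma\cdot (M,v)$ (σ followed by $M$ then $v$) contains some pattern of $P$, where $M>\max(\sigma)$; $\mathrm{forb}(\sigma,P)$ is the number of such forbidden values. *)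

From mathcomp Require Import all_boot.
Set Implicit Arguments. Unset Strict Implicit. Unset Printing Implicit Defensive.

Definition order_iso (t p : seq nat) : bool :=
  (size t == size p) &&
  [forall i : 'I_(size t), forall j : 'I_(size t),
     ((nth 0 t i < nth 0 t j) == (nth 0 p i < nth 0 p j)) &&
     ((nth 0 t i == nth 0 t j) == (nth 0 p i == nth 0 p j))].

(* subsequences of s are exactly the masks of s by bit-vectors of length size s *)
Definition contains (s p : seq nat) : bool :=
  [exists m : (size s).-tuple bool, order_iso (mask m s) p].

Definition avoids (s : seq nat) (P : seq (seq nat)) : Prop :=
  forall p, p \in P -> ~~ contains s p.

Definition p010 : seq nat := [:: 0; 1; 0].
Definition p210 : seq nat := [:: 2; 1; 0].

Definition seqmax (s : seq nat) : nat := \max_(x <- s) x.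

(* v is forbidden: s ++ [M; v] contains some pattern of P, with M > max s
   (we take M = max s + 1). *)
Definition forbidden (s : seq nat) (P : seq (seq nat)) (v : nat) : bool :=
  has (contains (s ++ [:: (seqmax s).+1; v])) P.

Definition forb (s : seq nat) (P : seq (seq nat)) : nat :=
  count (forbidden s P) (iota 0 (seqmax s).+1).

Definition qval (s : seq nat) : nat :=
  \max_(l < size s | [exists i : 'I_(size s), (i < l) && (nth 0 s l < nth 0 s i)])
     nth 0 s l.

Definition rval (s : seq nat) : nat :=
  size (undup [seq x <- s | qval s <= x]).

From mathcomp Require Import all_boot.
Set Implicit Arguments. Unset Strict Implicit. Unset Printing Implicit Defensive.

(* Let M exceed every entry of s and let s avoid 010 and 210.  An occurrence of
   010 in s ++ [:: M; v] must use M as its peak and v as its last entry, so it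
   exists iff v occurs in s; an occurrence of 210 must end at v with its first
   two entries a descent x > y of s, so it exists iff v < y for some descent,
   i.e. iff v < q.  The forbidden values are therefore [0, q) together with the
   values of s that are at least q, and there are q + r of them. *)

Lemma containsP t p :
  reflect (exists2 u, subseq u t & order_iso u p) (contains t p).
Proof.
apply: (iffP existsP) => [[m iso_mp] | [u /subseqP[m size_m ->] iso_up]].
  by exists (mask m t); first exact: mask_subseq.
by exists (Tuple (introT eqP size_m)).
Qed.

Lemma order_iso_size u p : order_iso u p -> size u = size p.
Proof. by case/andP=> /eqP. Qed.

Lemma order_iso010 x y z : order_iso [:: x; y; z] p010 = (x == z) && (x < y).
Proof.
apply/idP/idP => [/andP[_ /forallP iso] | /andP[/eqP <- lt_xy]].
  have /forallP iso0 := iso ord0.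
  have /andP[_ /eqP eq_xz] := iso0 (@Ordinal 3 2 isT).
  have /andP[/eqP lt_xy _] := iso0 (@Ordinal 3 1 isT).
  by rewrite /= in eq_xz lt_xy; rewrite eq_xz lt_xy.
apply/andP; split=> //; apply/forallP=> i; apply/forallP=> j.
case: i j => [[|[|[|i]]] ?] [[|[|[|j]]] ?] //=;
  by rewrite ?ltnn ?eqxx /=; move: lt_xy; case: ltngtP.
Qed.

Lemma order_iso210 x y z : order_iso [:: x; y; z] p210 = (y < x) && (z < y).
Proof.
apply/idP/idP => [/andP[_ /forallP iso] | /andP[lt_yx lt_zy]].
  have /forallP iso1 := iso (@Ordinal 3 1 isT).
  have /andP[/eqP lt_yx _] := iso1 ord0.
  have /forallP iso2 := iso (@Ordinal 3 2 isT).
  have /andP[/eqP lt_zy _] := iso2 (@Ordinal 3 1 isT).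
  by rewrite /= in lt_yx lt_zy; rewrite lt_yx lt_zy.
have lt_zx := ltn_trans lt_zy lt_yx.
apply/andP; split=> //; apply/forallP=> i; apply/forallP=> j.
case: i j => [[|[|[|i]]] ?] [[|[|[|j]]] ?] //=;
  by rewrite ?ltnn ?eqxx /=; move: lt_yx lt_zy lt_zx;
     case: (ltngtP x y); case: (ltngtP y z); case: (ltngtP x z).
Qed.

Lemma contains3P t p :
  size p = 3 ->
  reflect (exists x y z, subseq [:: x; y; z] t /\ order_iso [:: x; y; z] p)
          (contains t p).
Proof.
move=> size_p; apply: (iffP (containsP t p)) => [[u sub_ut iso_up] | ].
  move: (order_iso_size iso_up); rewrite size_p.
  by case: u sub_ut iso_up => [|x [|y [|z []]]] // *; exists x, y, z.
by case=> x [y [z [sub iso]]]; exists [:: x; y; z].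
Qed.

Lemma contains010P t :
  reflect (exists x y, subseq [:: x; y; x] t /\ x < y) (contains t p010).
Proof.
apply: (iffP (@contains3P t p010 erefl)) => [[x [y [z []]]] | [x [y []]]].
  rewrite order_iso010 => sub /andP[/eqP eq_xz lt_xy].
  by exists x, y; rewrite {2}eq_xz.
by exists x, y, x; rewrite order_iso010 eqxx.
Qed.

Lemma contains210P t :
  reflect (exists x y z, subseq [:: x; y; z] t /\ z < y < x) (contains t p210).
Proof.
apply: (iffP (@contains3P t p210 erefl)) => [[x [y [z []]]] | [x [y [z []]]]].
  by rewrite order_iso210 => sub /andP[lt_yx lt_zy]; exists x, y, z; rewrite lt_zy.
by move=> sub lt_zyx; exists x, y, z; rewrite order_iso210 andbC.
Qed.

Lemma subseq2_nthP (s : seq nat) x y :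
  reflect (exists i l, [/\ i < l < size s, nth 0 s i = x & nth 0 s l = y])
          (subseq [:: x; y] s).
Proof.
elim: s => [|a s IHs] /=; first by right=> [[i [l [/andP[]]]]].
have [<- | ne_xa] := eqVneq x a.
  rewrite sub1seq; apply: (iffP idP) => [y_s | [[|i] [[|l] []]] //=].
    by exists 0, (index y s).+1; rewrite /= ltnS index_mem y_s nth_index.
  - by move=> l_s _ <-; rewrite mem_nth.
  - by move=> /andP[_ l_s] _ <-; rewrite mem_nth.
apply: (iffP IHs) => [[i [l [il_s <- <-]]] | [[|i] [[|l] []]] //=].
  by exists i.+1, l.+1.
- by move=> _ eq_ax; rewrite eq_ax eqxx in ne_xa.
- by move=> il_s nth_i nth_l; exists i, l.
Qed.

Lemma mem_leq_seqmax (s : seq nat) x : x \in s -> x <= seqmax s.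
Proof. by move=> x_s; apply: (leq_bigmax_seq (F := id) _ x_s). Qed.

Lemma qval_leq_seqmax (s : seq nat) : qval s <= seqmax s.
Proof. by apply/bigmax_leqP => l _; rewrite mem_leq_seqmax ?mem_nth. Qed.

Lemma descent_leq_qval (s : seq nat) x y :
  subseq [:: x; y] s -> y < x -> y <= qval s.
Proof.
case/subseq2_nthP => i [l [/andP[lt_il lt_ls] <- <-]] desc.
apply: (leq_bigmax_cond (F := fun l : 'I_(size s) => nth 0 s l) (Ordinal lt_ls)).
by apply/existsP; exists (Ordinal (ltn_trans lt_il lt_ls)); rewrite /= lt_il.
Qed.

Lemma ltn_qvalP (s : seq nat) v :
  reflect (exists x y, [/\ subseq [:: x; y] s, y < x & v < y]) (v < qval s).
Proof.
apply: (iffP idP) => [lt_vq | [x [y [sub_xy lt_yx lt_vy]]]]; last first.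
  exact: leq_trans lt_vy (descent_leq_qval sub_xy lt_yx).
have [l /andP[/existsP[i /andP[lt_il desc]] lt_vl] | no_l] :=
  pickP (fun l : 'I_(size s) =>
    [exists i : 'I_(size s), (i < l) && (nth 0 s l < nth 0 s i)] && (v < nth 0 s l)).
  exists (nth 0 s i), (nth 0 s l); split=> //.
  by apply/subseq2_nthP; exists i, l; rewrite lt_il ltn_ord.
move: lt_vq; rewrite ltnNge => /negP[]; apply/bigmax_leqP => l desc_l.
by rewrite leqNgt; apply/negP => lt_vl; move: (no_l l); rewrite desc_l lt_vl.
Qed.

Lemma subseq3_cat2 (s : seq nat) x y z M v :
  subseq [:: x; y; z] (s ++ [:: M; v]) ->
  [\/ [/\ x \in s, y = M & z = v], subseq [:: x; y] s /\ z = v,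
      subseq [:: x; y] s /\ z = M | subseq [:: x; y; z] s].
Proof.
rewrite -subseq_rev rev_cat (_ : rev [:: x; y; z] = [:: z; y; x]) //.
have rev2 a b : subseq [:: b; a] (rev s) = subseq [:: a; b] s.
  by rewrite -[RHS]subseq_rev.
have rev3 : subseq [:: z; y; x] (rev s) = subseq [:: x; y; z] s.
  by rewrite -[RHS]subseq_rev.
case: (eqVneq z v) => [-> | ne_zv].
  case: (eqVneq y M) => [-> | ne_yM] /=; rewrite eqxx.
    by rewrite eqxx sub1seq mem_rev => x_s; apply: Or41.
  by rewrite (negbTE ne_yM) rev2 => sub_xy; apply: Or42.
case: (eqVneq z M) => [eq_zM | ne_zM] /=; rewrite (negbTE ne_zv).
  by rewrite eq_zM eqxx -rev2 => sub_xy; apply: Or43.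
by rewrite (negbTE ne_zM) rev3 => sub_xyz; apply: Or44.
Qed.

Section AppendPeak.

Variables (s : seq nat) (M v : nat).
Hypothesis lt_sM : {in s, forall x, x < M}.

Lemma contains010_cat_peak :
  ~~ contains s p010 -> contains (s ++ [:: M; v]) p010 = (v \in s).
Proof.
move=> s_avoids; apply/contains010P/idP => [[x [y [sub lt_xy]]] | v_s].
  case: (subseq3_cat2 sub) =>
    [[x_s _ <-] | [/mem_subseq sub_s <-] | [sub_xy eq_xM] | sub_xyx] //.
  - by rewrite sub_s ?mem_head.
  - by have := lt_sM (mem_subseq sub_xy (mem_head _ _)); rewrite eq_xM ltnn.
  - by case/negP: s_avoids; apply/contains010P; exists x, y.
exists v, M; split; last exact: lt_sM.
by rewrite -cat1s cat_subseq ?sub1seq ?subseq_refl.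
Qed.

Lemma contains210_cat_peak :
  ~~ contains s p210 -> contains (s ++ [:: M; v]) p210 = (v < qval s).
Proof.
move=> s_avoids; apply/contains210P/ltn_qvalP.
  case=> x [y [z [sub /andP[lt_zy lt_yx]]]].
  case: (subseq3_cat2 sub) =>
    [[x_s eq_yM _] | [sub_xy eq_zv] | [sub_xy eq_zM] | sub_xyz].
  - by have := ltn_trans lt_yx (lt_sM x_s); rewrite eq_yM ltnn.
  - by exists x, y; rewrite -eq_zv.
  - have y_s : y \in s by apply: (mem_subseq sub_xy); rewrite mem_seq2 eqxx orbT.
    by have := ltn_trans lt_zy (lt_sM y_s); rewrite eq_zM ltnn.
  - by case/negP: s_avoids; apply/contains210P; exists x, y, z; rewrite lt_zy.
case=> x [y [sub_xy lt_yx lt_vy]]; exists x, y, v; split; last by rewrite lt_vy.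
rewrite -[[:: x; y; v]]/([:: x; y] ++ [:: v]) cat_subseq //.
by rewrite sub1seq mem_seq2 eqxx orbT.
Qed.

End AppendPeak.

Lemma forbidden010_210 (s : seq nat) v :
  avoids s [:: p010; p210] ->
  forbidden s [:: p010; p210] v = (v \in s) || (v < qval s).
Proof.
move=> s_avoids; have lt_s_peak : {in s, forall x, x < (seqmax s).+1}.
  by move=> x /mem_leq_seqmax.
rewrite /forbidden /= orbF contains010_cat_peak ?contains210_cat_peak //;
  by apply: s_avoids; rewrite !inE eqxx ?orbT.
Qed.

Lemma count_mem_or_ltn_iota (s : seq nat) q n :
  q <= n -> {in s, forall x, x < n} ->
  count (fun v => (v \in s) || (v < q)) (iota 0 n) =
    q + size (undup [seq x <- s | q <= x]).
Proof.
move=> le_qn lt_sn; rewrite -(subnKC le_qn) iotaD count_cat add0n.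
congr (_ + _).
  rewrite (eq_in_count (a2 := predT)) ?count_predT ?size_iota //.
  by move=> x; rewrite mem_iota /= add0n => ->; rewrite orbT.
rewrite (eq_in_count (a2 := mem s)); last first.
  by move=> x; rewrite mem_iota => /andP[le_qx _]; rewrite /= ltnNge le_qx orbF.
rewrite -size_filter; apply/perm_size/uniq_perm;
  rewrite ?filter_uniq ?iota_uniq ?undup_uniq //.
move=> x; rewrite mem_filter mem_iota mem_undup mem_filter subnKC //.
apply/idP/idP => [/andP[x_s /andP[le_qx _]] | /andP[le_qx x_s]].
  by rewrite le_qx.
by apply/and3P; split; rewrite ?lt_sn.
Qed.

Theorem mainTheorem8 (s : seq nat) :
  s != [::] ->
  avoids s [:: p010; p210] ->
  forb s [:: p010; p210] = qval s + rval s.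
Proof.
move=> _ s_avoids.
rewrite /forb (eq_count (fun v => forbidden010_210 v s_avoids)).
apply: count_mem_or_ltn_iota; first exact: leqW (qval_leq_seqmax s).
by move=> x /mem_leq_seqmax.
Qed.
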